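(* Let $n \ge 5$ and let $S$ be a set of transpositions generating $S_n$. Let $G$ be the automorphism group of the Cayley graph $X = \mathrm{Cay}(S_n,S)$, let $G_e$ be the stabilizer in $G$ of the identity vertex $e$, and let $L_e$ be the subgroup of $G_e$ consisting of the automorphisms that fix $e$ and each of its neighbors. Then $G_e = L_e \rtimes \mathrm{Aut}(S_n,S)$, i.e. $G_e = L_e \,\mathrm{Aut}(S_n,S)$ with $L_e$ normal in $G_e$ and $L_e \cap \mathrm{Aut}(S_n,S) = 1$.
   Context: The Cayley graph $\mathrm{Cay}(S_n,S)$ has vertex set $S_n$ and edge set $\{\{h, sh\} : h \in S_n, s \in S\}$; the neighbors of $e$ are exactly the elements of $S$. $\mathrm{Aut}(S_n,S)$ denotes the group of group automorphisms $\phi$ of $S_n$ with $\phi(S) = S$; each such $\phi$ is a permutation of $S_n$ that fixes $e$ and is an automorphism of $\mathrm{Cay}(S_n,S)$, so $\mathrm{Aut}(S_n,S)$ is regarded as a subgroup of $G_e$. *)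

From mathcomp Require Import all_boot all_fingroup.
Set Implicit Arguments. Unset Strict Implicit. Unset Printing Implicit Defensive.
Import GroupScope.
Local Open Scope group_scope.

Notation Sn n := {perm 'I_n}.

(* Edge {h, s h} of Cay(S_n, S) (s \in S), as a symmetric relation. *)
Definition cay_adj (n : nat) (S : {set Sn n}) (h k : Sn n) : bool :=
  (k * h^-1 \in S) || (h * k^-1 \in S).

Definition cay_aut (n : nat) (S : {set Sn n}) : {set {perm Sn n}} :=
  [set f : {perm Sn n} |
     [forall h : Sn n, forall k : Sn n, cay_adj S (f h) (f k) == cay_adj S h k]].

Definition cay_stab (n : nat) (S : {set Sn n}) : {set {perm Sn n}} :=
  [set f in cay_aut S | f 1 == 1].

Definition cay_local (n : nat) (S : {set Sn n}) : {set {perm Sn n}} :=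
  [set f in cay_stab S | [forall s in S, f s == s]].

Definition AutSnS (n : nat) (S : {set Sn n}) : {set {perm Sn n}} :=
  [set a in Aut [set: Sn n] | a @: S == S].

Definition is_transposition (n : nat) (s : Sn n) : Prop :=
  exists i j : 'I_n, i != j /\ s = tperm i j.

From mathcomp Require Import all_boot all_fingroup.
Set Implicit Arguments. Unset Strict Implicit. Unset Printing Implicit Defensive.
Import GroupScope.
Local Open Scope group_scope.

(* An automorphism f of Cay(S_n, S) fixing e permutes the neighbourhood S of e,
   and two graph properties of neighbours of e can be read off on S: distinct
   s, t in S commute (have disjoint supports) iff they have a common neighbour
   w <> e whose only neighbours in S are s and t, and u = s^t iff s, t, u have
   a common neighbour w <> e.  Preserving both, f sends the transpositions of
   S moving a point i exactly onto those moving some point pi(i); as S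
   generates S_n, pi is a permutation of the points and f agrees on S with the
   conjugation a by pi, which lies in Aut(S_n, S).  Hence f a^-1 is in L_e, the
   kernel of the action of G_e on S, and L_e meets Aut(S_n, S) trivially since
   an automorphism of S_n fixing the generators S is the identity. *)

Section Transpositions.
Variable T : finType.
Implicit Types (s t u x y : {perm T}) (i j k p q z : T).

Definition transposition s := exists i j, i != j /\ s = tperm i j.

Definition overlap s t := [exists z, (s z != z) && (t z != z)].

Lemma overlapC s t : overlap s t = overlap t s.
Proof. by apply/existsP/existsP => -[z]; rewrite andbC; exists z. Qed.

Lemma overlap_at s t z : s z != z -> t z != z -> overlap s t.
Proof. by move=> sz tz; apply/existsP; exists z; rewrite sz. Qed.

Lemma noverlap_fix s t z : ~~ overlap s t -> s z != z -> t z = z.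
Proof. by move=> st sz; apply/eqP; apply: contraNT st => /(overlap_at sz). Qed.

Lemma noverlap_neq s t z1 z2 : ~~ overlap s t -> s z1 != z1 -> t z2 != z2 -> z1 != z2.
Proof.
by move=> st sz tz; apply: contraNneq tz => <-; rewrite (noverlap_fix st sz).
Qed.

Lemma tperm_movesE i j z : i != j -> (tperm i j z != z) = (z == i) || (z == j).
Proof.
move=> ij; case: tpermP => [->|->|zi zj]; first by rewrite eqxx /= eq_sym.
  by rewrite eqxx orbT.
by rewrite eqxx; apply/esym/norP; split; apply/eqP.
Qed.

Lemma tperm_transposition i j : i != j -> transposition (tperm i j).
Proof. by move=> ij; exists i, j. Qed.

Lemma transp_mulss s : transposition s -> s * s = 1.
Proof. by case=> i [j [_ ->]]; exact: tperm2. Qed.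

Lemma transpV s : transposition s -> s^-1 = s.
Proof. by case=> i [j [_ ->]]; exact: tpermV. Qed.

Lemma transpK s z : transposition s -> s (s z) = z.
Proof. by case=> i [j [_ ->]]; rewrite tpermK. Qed.

Lemma transp_mulgK s w : transposition s -> w * s * s = w.
Proof. by move=> ts; rewrite -mulgA transp_mulss ?mulg1. Qed.

Lemma mulg_tpermJ i j x : tperm i j * x * tperm i j = x ^ tperm i j.
Proof. by rewrite /conjg tpermV mulgA. Qed.

Lemma transp_mul_eq1 x y : transposition y -> x * y = 1 -> x = y.
Proof. by move=> ty /(canRL (mulgK y)); rewrite mul1g transpV. Qed.

Lemma transp_mul_neq1 x y : transposition y -> x != y -> x * y != 1.
Proof. by move=> ty; apply: contra => /eqP/(transp_mul_eq1 ty) ->. Qed.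

Lemma transp_mulg_neq s w : transposition s -> w != 1 -> w * s != s.
Proof.
by move=> ts; apply: contra => /eqP ws; rewrite -(transp_mulgK w ts) ws transp_mulss.
Qed.

Lemma transpE s z : transposition s -> s z != z -> s = tperm z (s z).
Proof.
case=> i [j [ij ->]]; rewrite tperm_movesE // => /orP[]/eqP->.
  by rewrite tpermL.
by rewrite tpermR tpermC.
Qed.

Lemma transp_moves_image s z : transposition s -> s z != z -> s (s z) != s z.
Proof. by move=> ts mz; rewrite transpK // eq_sym. Qed.

Lemma transp_moved3 s a b c : transposition s ->
  s a != a -> s b != b -> s c != c -> [|| a == b, b == c | a == c].
Proof.
case=> i [j [ij ->]]; rewrite !tperm_movesE //.
by case/orP=>/eqP->; case/orP=>/eqP->; case/orP=>/eqP->; rewrite ?eqxx ?orbT.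
Qed.

Lemma transp_eq_moved2 s s' p q : transposition s -> transposition s' -> p != q ->
  s p != p -> s q != q -> s' p != p -> s' q != q -> s = s'.
Proof.
move=> ts ts' pq sp sq s'p s'q.
have image_p r : transposition r -> r p != p -> r q != q -> r p = q.
  move=> tr rp; rewrite {1}(transpE tr rp) tperm_movesE; last by rewrite eq_sym.
  by case/orP=> /eqP // qp; rewrite qp eqxx in pq.
by rewrite (transpE ts sp) (transpE ts' s'p) (image_p s) // (image_p s').
Qed.

Lemma transp_pair s t p : transposition s -> transposition t -> s != t ->
  s p != p -> t p != p ->
  exists q r, [/\ s = tperm p q, t = tperm p r, q != p, r != p & q != r].
Proof.
move=> ts tt st sp tp; exists (s p), (t p); split=> //; try exact: transpE.
by apply: contra st => /eqP e; rewrite (transpE ts sp) (transpE tt tp) e.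
Qed.

Lemma transp_mul_support x y x' y' z :
  transposition x -> transposition y -> transposition x' -> transposition y' ->
  x != y -> x * y = x' * y' -> y' z != z -> (x z != z) || (y z != z).
Proof.
move=> tx ty tx' ty' xy E y'z; apply: contraT; rewrite negb_or !negbK.
case/andP=> /eqP xz /eqP yz.
have y'x'z : y' (x' z) = z by rewrite -permM -E permM xz yz.
have x'z : x' z != z by apply: contra y'z => /eqP x'z; rewrite -{2}y'x'z x'z.
have x'E : x' = y'.
  rewrite (transpE tx' x'z) (transpE ty' y'z); congr tperm.
  by rewrite -{2}y'x'z transpK.
by case/negP: xy; rewrite (transp_mul_eq1 ty (_ : x * y = 1)) // E x'E transp_mulss.
Qed.

Lemma noverlap_mul_cross x y x' p q :
  transposition x -> transposition y -> transposition x' -> ~~ overlap x y ->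
  x p != p -> y q != q -> x * y != x' * tperm p q.
Proof.
move=> tx ty tx' d xp yq; apply/eqP => E.
have pq : p != q := noverlap_neq d xp yq.
have x'E : x' = x * y * tperm p q by rewrite E -mulgA tperm2 mulg1.
set p' := x p; set q' := y q.
have xp' : x p' != p' by exact: transp_moves_image.
have yq' : y q' != q' by exact: transp_moves_image.
have yp : y p = p := noverlap_fix d xp.
have yp' : y p' = p' := noverlap_fix d xp'.
have xq' : x q' = q' by apply: noverlap_fix yq'; rewrite overlapC.
have p'q : p' != q := noverlap_neq d xp' yq.
have q'p : q' != p by rewrite eq_sym; exact: noverlap_neq d xp yq'.
have p'q' : p' != q' := noverlap_neq d xp' yq'.
have p'p : p' != p by [].
have x'p' : x' p' = q by rewrite x'E !permM transpK // yp tpermL.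
have x'q' : x' q' = p by rewrite x'E !permM xq' transpK // tpermR.
have x'p : x' p = p' by rewrite x'E !permM yp' tpermD // eq_sym.
(* x' would move the three distinct points p, p' and q'. *)
have := transp_moved3 tx' (_ : x' p' != p') (_ : x' q' != q') (_ : x' p != p).
rewrite x'p' x'q' x'p eq_sym p'q eq_sym q'p p'p => /(_ isT isT isT).
by rewrite (negbTE p'q') (negbTE q'p) (negbTE p'p).
Qed.

Lemma noverlap_transp_factor x y x' y' :
  transposition x -> transposition y -> transposition x' -> transposition y' ->
  ~~ overlap x y -> x * y = x' * y' -> y' = x \/ y' = y.
Proof.
move=> tx ty tx' ty' d E.
have xy : x != y.
  case: (tx) => i [j [ij xE]]; have xi : x i != i by rewrite xE tpermL eq_sym.
  by apply: contraNneq ij => xy; move: (noverlap_fix d xi); rewrite -xy xE tpermL => ->.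
case: (ty') => p [q [pq y'E]].
have y'p : y' p != p by rewrite y'E tpermL eq_sym.
have y'q : y' q != q by rewrite y'E tpermR.
move: (transp_mul_support tx ty tx' ty' xy E y'p).
move: (transp_mul_support tx ty tx' ty' xy E y'q).
case/orP=> hq; case/orP=> hp.
- by left; apply: (transp_eq_moved2 ty' tx pq).
- by case/eqP: (noverlap_mul_cross tx ty tx' d hq hp); rewrite E y'E tpermC.
- by case/eqP: (noverlap_mul_cross tx ty tx' d hp hq); rewrite E y'E.
- by right; apply: (transp_eq_moved2 ty' ty pq).
Qed.

Lemma noverlap_transp_commute x y :
  transposition x -> transposition y -> ~~ overlap x y -> commute x y.
Proof.
move=> tx ty d; apply/permP=> z; rewrite !permM.
have d' : ~~ overlap y x by rewrite overlapC.
have [xz|xz] := eqVneq (x z) z.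
  rewrite xz; have [->|yz] := eqVneq (y z) z; first by rewrite xz.
  by rewrite (noverlap_fix d') // transp_moves_image.
by rewrite (noverlap_fix d xz) (noverlap_fix d) // transp_moves_image.
Qed.

Lemma overlap_transp_chain s t : transposition s -> transposition t -> s != t ->
  overlap s t ->
  exists i j k, [/\ i != j, j != k, i != k, s = tperm i j & t = tperm j k].
Proof.
move=> ts tt st /existsP[z /andP[sz tz]].
exists (s z), z, (t z); split=> //; last exact: transpE.
- by rewrite eq_sym.
- by apply: contra st => /eqP e; rewrite (transpE ts sz) (transpE tt tz) e.
- by rewrite {1}(transpE ts sz) tpermC.
Qed.

Lemma tperm_chain_noncommute i j k : i != j -> j != k -> i != k ->
  tperm i j * tperm j k != tperm j k * tperm i j.
Proof.
move=> ij jk ik; apply/eqP=> /permP/(_ i); rewrite !permM tpermL tpermL.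
rewrite (tpermD (_ : j != i)) 1?eq_sym // tpermL => /eqP.
by rewrite eq_sym (negbTE jk).
Qed.

Lemma tperm_chain_conj i j k : i != j -> j != k -> i != k ->
  tperm i j ^ tperm j k = tperm i k.
Proof. by move=> ij jk ik; rewrite tpermJ tpermL tpermD // eq_sym. Qed.

Lemma transp_on3 i j k u : i != j -> j != k -> i != k -> transposition u ->
  (forall z, u z != z -> [|| z == i, z == j | z == k]) ->
  u != tperm i j -> u != tperm j k -> u = tperm i k.
Proof.
move=> ij jk ik [p [q [pq ->]]] onijk.
have up : tperm p q p != p by rewrite tpermL eq_sym.
have uq : tperm p q q != q by rewrite tpermR.
move: (onijk _ up) (onijk _ uq) pq.
case/or3P=> /eqP-> /or3P[]/eqP->;
  by rewrite ?eqxx // ?(tpermC j i) ?(tpermC k j) ?(tpermC k i) ?eqxx.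
Qed.

Lemma tperm_chain_mul_factor i j k a b : i != j -> j != k -> i != k ->
  transposition a -> transposition b ->
  a * tperm i j = b * tperm j k -> a != tperm i j ->
  a = tperm j k \/ a = tperm i k.
Proof.
move=> ij jk ik ta tb E aij.
have tij := tperm_transposition ij; have tjk := tperm_transposition jk.
have jkk : tperm j k k != k by rewrite tpermR.
have := transp_mul_support ta tij tb tjk aij E jkk; rewrite tpermD ?eqxx ?orbF //.
move=> ak; have aE := transpE ta ak; set l := a k in aE ak.
have [lj|lj] := eqVneq l j; first by left; rewrite aE lj tpermC.
have [li|li] := eqVneq l i; first by right; rewrite aE li tpermC.
have d : ~~ overlap a (tperm i j).
  apply/existsP => -[z /andP[]]; rewrite aE tperm_movesE; last by rewrite eq_sym.
  by case/orP=> /eqP->; rewrite tpermD ?eqxx // eq_sym.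
case: (noverlap_transp_factor ta tij tb tjk d E) => /permP/(_ k).
  by rewrite aE tpermR tpermL => /eqP; rewrite eq_sym (negbTE lj).
by rewrite tpermR tpermD // => /eqP; rewrite (negbTE jk).
Qed.

Lemma overlap_transp_conj a b c p :
  transposition a -> transposition b -> transposition c -> a != b ->
  a p != p -> b p != p -> c p == p -> overlap c a -> overlap c b -> c = a ^ b.
Proof.
move=> ta tb tc ab ap bp cp /existsP[z1 /andP[c1 a1]] /existsP[z2 /andP[c2 b2]].
have [q [r [aE bE qp rp qr]]] := transp_pair ta tb ab ap bp; subst a b.
have z1p : z1 != p by apply: contraNneq c1 => ->.
have z2p : z2 != p by apply: contraNneq c2 => ->.
have pq : p != q by rewrite eq_sym.
have pr : p != r by rewrite eq_sym.
move: a1; rewrite tperm_movesE // (negbTE z1p) /= => /eqP e1; subst z1.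
move: b2; rewrite tperm_movesE // (negbTE z2p) /= => /eqP e2; subst z2.
rewrite (transp_eq_moved2 tc (tperm_transposition qr) qr c1 c2) ?tpermL ?tpermR //.
  by rewrite tpermJ tpermL (tpermD pq) 1?eq_sym // tpermC.
by rewrite eq_sym.
Qed.

Lemma transp_conj_fix a b p : transposition a -> transposition b -> a != b ->
  a p != p -> b p != p -> (a ^ b) p == p.
Proof.
move=> ta tb ab ap bp.
have [q [r [-> -> qp rp qr]]] := transp_pair ta tb ab ap bp.
by rewrite tpermJ tpermL tpermD // tpermD // eq_sym.
Qed.

End Transpositions.

Section CayleyGroups.
Variables (n : nat) (S : {set {perm 'I_n}}).

Lemma cay_aut_adj f h k : f \in cay_aut S -> cay_adj S (f h) (f k) = cay_adj S h k.
Proof. by rewrite inE => /forallP/(_ h)/forallP/(_ k)/eqP. Qed.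

Lemma group_set_cay_aut : group_set (cay_aut S).
Proof.
apply/group_setP; split=> [|f g Hf Hg]; rewrite inE.
  by apply/forallP=> h; apply/forallP=> k; rewrite !perm1.
by apply/forallP=> h; apply/forallP=> k; rewrite !permM !cay_aut_adj.
Qed.
Canonical cay_aut_group := Group group_set_cay_aut.

Lemma cay_stabE f : (f \in cay_stab S) = (f \in cay_aut S) && (f 1 == 1).
Proof. by rewrite [in LHS]inE. Qed.

Lemma group_set_cay_stab : group_set (cay_stab S).
Proof.
apply/group_setP; split=> [|f g]; rewrite !cay_stabE ?group1 ?perm1 ?eqxx //.
by case/andP=> Hf /eqP f1 /andP[Hg /eqP g1]; rewrite groupM // permM f1 g1 eqxx.
Qed.
Canonical cay_stab_group := Group group_set_cay_stab.

Lemma cay_localE : cay_local S = cay_stab S :&: 'C(S | 'P).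
Proof.
apply/setP=> f; rewrite !inE; congr (_ && _); apply/forall_inP/subsetP.
  by move=> fS s sS; rewrite inE; apply: fS.
by move=> fS s /fS; rewrite inE.
Qed.

End CayleyGroups.

Section CayleyTranspositions.
Variables (n : nat) (S : {set {perm 'I_n}}).
Hypothesis transpS : forall s, s \in S -> transposition s.

Lemma memVS x : (x^-1 \in S) = (x \in S).
Proof.
apply/idP/idP => [xVS|xS]; last by rewrite (transpV (transpS xS)).
by rewrite -(invgK x) (transpV (transpS xVS)).
Qed.

Lemma cay_adjS w s : s \in S -> cay_adj S w s = (w * s \in S).
Proof.
move=> sS; rewrite /cay_adj -{1}(transpV (transpS sS)) -invMg memVS.
by rewrite (transpV (transpS sS)) orbb.
Qed.

Lemma cay_adj1 k : cay_adj S 1 k = (k \in S).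
Proof. by rewrite /cay_adj invg1 mulg1 mul1g memVS orbb. Qed.

Lemma cay_stab_memS f x : f \in cay_stab S -> (f x \in S) = (x \in S).
Proof.
rewrite cay_stabE => /andP[fG /eqP f1].
by rewrite -!cay_adj1 -{1}f1 cay_aut_adj.
Qed.

Lemma cay_stab_norm : cay_stab S \subset 'N(S | 'P).
Proof. by apply/subsetP=> f /cay_stab_memS fS; apply/astabsP. Qed.

Definition common_nbr3 s t u :=
  [exists w, [&& w != 1, cay_adj S w s, cay_adj S w t & cay_adj S w u]].

Definition private_common_nbr s t :=
  [exists w, [&& w != 1, cay_adj S w s, cay_adj S w t &
     [forall x in S, cay_adj S w x ==> (x == s) || (x == t)]]].

Lemma private_common_nbr_noverlap s t : s \in S -> t \in S -> s != t ->
  private_common_nbr s t -> ~~ overlap s t.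
Proof.
move=> sS tS st /existsP[w /and4P[w1 wsS wtS /forall_inP onlyst]].
apply/negP => /(overlap_transp_chain (transpS sS) (transpS tS) st).
case=> i [j [k [ij jk ik sE tE]]].
rewrite cay_adjS // in wsS; rewrite cay_adjS // in wtS.
have wsE := transp_mulgK w (transpS sS); have wtE := transp_mulgK w (transpS tS).
have kj : k != j by rewrite eq_sym.
have ji : j != i by rewrite eq_sym.
have ki : k != i by rewrite eq_sym.
have E : (w * s) * tperm i j = (w * t) * tperm j k by rewrite -sE -tE wsE wtE.
have E' : (w * t) * tperm k j = (w * s) * tperm j i.
  by rewrite tpermC (tpermC j i) E.
have ws_ij : w * s != tperm i j by rewrite -sE (transp_mulg_neq (transpS sS) w1).
have wt_kj : w * t != tperm k j by rewrite tpermC -tE (transp_mulg_neq (transpS tS) w1).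
have ik_ij : tperm i k != tperm i j.
  by apply/eqP=> /permP/(_ i); rewrite !tpermL => /eqP; rewrite eq_sym (negbTE jk).
have ik_jk : tperm i k != tperm j k.
  by apply/eqP=> /permP/(_ k); rewrite !tpermR => /eqP; rewrite (negbTE ij).
have third_nbr : tperm i k \in S -> w * tperm i k \in S -> False.
  move=> ikS wikS; move: (onlyst _ ikS); rewrite cay_adjS // wikS sE tE /=.
  by rewrite (negbTE ik_ij) (negbTE ik_jk).
(* Either w equals both (jk)(ij) and (ij)(jk), or (ik) lies in S and is a third
   neighbour of w. *)
have [wsE'|wsE'] := tperm_chain_mul_factor ij jk ik (transpS wsS) (transpS wtS) E ws_ij.
  have [wtE'|wtE'] :=
    tperm_chain_mul_factor kj ji ki (transpS wtS) (transpS wsS) E' wt_kj.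
    have w_ijjk : w = tperm i j * tperm j k by rewrite -wtE wtE' tE tpermC.
    have w_jkij : w = tperm j k * tperm i j by rewrite -wsE wsE' sE.
    by move: (tperm_chain_noncommute ij jk ik); rewrite -w_ijjk -w_jkij eqxx.
  apply: third_nbr; first by rewrite tpermC -wtE'.
  rewrite -wtE wtE' tE (tpermC k i) mulg_tpermJ.
  by rewrite tpermJ tpermR tpermD // tpermC -sE.
apply: third_nbr; first by rewrite -wsE'.
rewrite -wsE wsE' sE mulg_tpermJ.
by rewrite tpermJ tpermL tpermD // tpermC -tE.
Qed.

Lemma noverlap_private_common_nbr s t : s \in S -> t \in S -> s != t ->
  ~~ overlap s t -> private_common_nbr s t.
Proof.
move=> sS tS st d; have ts := transpS sS; have tt := transpS tS.
apply/existsP; exists (s * t); rewrite !cay_adjS // transp_mul_neq1 ?transpS //.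
rewrite transp_mulgK // {1}(noverlap_transp_commute ts tt d) transp_mulgK // sS tS /=.
apply/forall_inP => x xS; rewrite cay_adjS //; apply/implyP => stxS.
have E : s * t = (s * t * x) * x by rewrite transp_mulgK //; apply: transpS.
by case: (noverlap_transp_factor ts tt (transpS stxS) (transpS xS) d E) => ->;
  rewrite eqxx ?orbT.
Qed.

Lemma private_common_nbrE s t : s \in S -> t \in S -> s != t ->
  private_common_nbr s t = ~~ overlap s t.
Proof.
move=> sS tS st; apply/idP/idP.
  exact: private_common_nbr_noverlap.
exact: noverlap_private_common_nbr.
Qed.

Section CommonNeighbour.
Variables (s t u w : {perm 'I_n}).
Hypotheses (sS : s \in S) (tS : t \in S) (uS : u \in S).
Hypotheses (st : s != t) (su : s != u) (tu : t != u).
Hypotheses (w1 : w != 1) (wsS : w * s \in S) (wtS : w * t \in S) (wuS : w * u \in S).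

Let s_tr := transpS sS.
Let t_tr := transpS tS.
Let u_tr := transpS uS.
Let ws_neq : w * s != s := transp_mulg_neq s_tr w1.

Lemma common_nbr3_overlap : overlap s t.
Proof.
apply: contraT => d.
have E : (w * s) * s = (w * t) * t by rewrite !transp_mulgK.
have wsE : w * s = t.
  case: (t_tr) => p [q [pq tE]].
  have tp : t p != p by rewrite tE tpermL eq_sym.
  have tq : t q != q by rewrite tE tpermR.
  have d' : ~~ overlap t s by rewrite overlapC.
  have moved r : t r != r -> (w * s) r != r.
    move=> tr; move: (transp_mul_support (transpS wsS) s_tr (transpS wtS) t_tr
      ws_neq E tr).
    by rewrite (noverlap_fix d' tr) eqxx orbF.
  exact: transp_eq_moved2 (transpS wsS) t_tr pq (moved p tp) (moved q tq) tp tq.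
have E' : t * s = (w * u) * u by rewrite -wsE !transp_mulgK.
have d' : ~~ overlap t s by rewrite overlapC.
case: (noverlap_transp_factor t_tr s_tr (transpS wuS) u_tr d' E') => uE.
  by move: tu; rewrite uE eqxx.
by move: su; rewrite uE eqxx.
Qed.

Lemma common_nbr3_conj : u = s ^ t.
Proof.
have [i [j [k [ij jk ik sE tE]]]] :=
  overlap_transp_chain s_tr t_tr st common_nbr3_overlap.
have E : (w * s) * tperm i j = (w * t) * tperm j k by rewrite -sE -tE !transp_mulgK.
have ws_ij : w * s != tperm i j by rewrite -sE.
have wsE := tperm_chain_mul_factor ij jk ik (transpS wsS) (transpS wtS) E ws_ij.
have E' : (w * s) * s = (w * u) * u by rewrite !transp_mulgK.
have u_on_ijk z : u z != z -> [|| z == i, z == j | z == k].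
  move=> uz; case/orP: (transp_mul_support (transpS wsS) s_tr (transpS wuS) u_tr
    ws_neq E' uz).
    by case: wsE => ->; rewrite tperm_movesE // => /orP[]/eqP->; rewrite eqxx ?orbT.
  by rewrite sE tperm_movesE // => /orP[]/eqP->; rewrite eqxx ?orbT.
have u_ij : u != tperm i j by rewrite -sE eq_sym.
have u_jk : u != tperm j k by rewrite -tE eq_sym.
by rewrite (transp_on3 ij jk ik u_tr u_on_ijk u_ij u_jk) sE tE
  tperm_chain_conj.
Qed.

End CommonNeighbour.

Lemma common_nbr3E s t u : s \in S -> t \in S -> u \in S ->
  s != t -> s != u -> t != u ->
  common_nbr3 s t u = overlap s t && (u == s ^ t).
Proof.
move=> sS tS uS st su tu; apply/idP/idP.
  case/existsP=> w /and4P[w1]; rewrite !cay_adjS // => wsS wtS wuS.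
  rewrite (common_nbr3_overlap sS tS uS su tu w1 wsS wtS wuS) /=.
  by rewrite (common_nbr3_conj sS tS uS st su tu w1 wsS wtS wuS).
case/andP=> stO /eqP uE; have ts := transpS sS; have tt := transpS tS.
have [i [j [k [ij jk ik sE tE]]]] := overlap_transp_chain ts tt st stO.
apply/existsP; exists (s * t); rewrite !cay_adjS // transp_mul_neq1 ?transpS //.
rewrite [s * t * t]transp_mulgK // sS /=; apply/andP; split.
  have uE' : u = tperm i k by rewrite uE sE tE tperm_chain_conj.
  by rewrite {1 2}sE mulg_tpermJ tE tpermJ tpermR tpermD // -uE'.
by rewrite uE /conjg transpV // !mulgA transp_mulgK // transp_mulss // mul1g.
Qed.

Lemma cay_stab_neq1 f w : f \in cay_stab S -> w != 1 -> f w != 1.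
Proof.
rewrite cay_stabE => /andP[_ /eqP f1].
by apply: contra => /eqP; rewrite -{1}f1 => /perm_inj ->.
Qed.

Lemma common_nbr3_stab_imply f s t u : f \in cay_stab S ->
  common_nbr3 s t u -> common_nbr3 (f s) (f t) (f u).
Proof.
move=> fG /existsP[w /and4P[w1 ws wt wu]]; apply/existsP; exists (f w).
have fA : f \in cay_aut S by move: fG; rewrite cay_stabE => /andP[].
by rewrite cay_stab_neq1 // !cay_aut_adj // ws wt wu.
Qed.

Lemma common_nbr3_stab f s t u : f \in cay_stab S ->
  common_nbr3 (f s) (f t) (f u) = common_nbr3 s t u.
Proof.
move=> fG; apply/idP/idP; last exact: common_nbr3_stab_imply.
by move/(common_nbr3_stab_imply (groupVr fG)); rewrite !permK.
Qed.

Lemma private_common_nbr_stab_imply f s t : f \in cay_stab S ->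
  private_common_nbr s t -> private_common_nbr (f s) (f t).
Proof.
move=> fG /existsP[w /and4P[w1 ws wt /forall_inP onlyst]]; apply/existsP.
have fA : f \in cay_aut S by move: fG; rewrite cay_stabE => /andP[].
exists (f w); rewrite cay_stab_neq1 // !cay_aut_adj // ws wt /=.
apply/forall_inP => x xS; rewrite -[x](permKV f) cay_aut_adj //.
have /onlyst : f^-1 x \in S by rewrite -(cay_stab_memS _ fG) permKV.
by case: (cay_adj S w _) => //= /orP[]/eqP->; rewrite eqxx ?orbT.
Qed.

Lemma private_common_nbr_stab f s t : f \in cay_stab S ->
  private_common_nbr (f s) (f t) = private_common_nbr s t.
Proof.
move=> fG; apply/idP/idP; last exact: private_common_nbr_stab_imply.
by move/(private_common_nbr_stab_imply (groupVr fG)); rewrite !permK.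
Qed.

End CayleyTranspositions.

Section Generation.
Variables (n : nat) (S : {set {perm 'I_n}}).
Hypotheses (genS : <<S>> = [set: {perm 'I_n}]) (n_gt2 : (2 < n)%N).

Lemma gen_stable_set (A : {set 'I_n}) :
  (forall s, s \in S -> forall z, z \in A -> s z \in A) ->
  forall (p : {perm 'I_n}) z, z \in A -> p z \in A.
Proof.
move=> SA p z zA.
have : S \subset 'N(A | 'P).
  by apply/subsetP=> s sS; rewrite !inE; apply/subsetP=> x xA; rewrite inE SA.
rewrite -gen_subG genS => /subsetP/(_ p (in_setT p)) pA.
by rewrite -(astabs_act z pA) in zA.
Qed.

Lemma exists_third_point (i j : 'I_n) : exists k, (k != i) && (k != j).
Proof.
apply/existsP; apply: contraLR n_gt2 => /existsPn noK; rewrite -leqNgt.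
have : [set: 'I_n] \subset [set i; j].
  by apply/subsetP=> k _; move: (noK k); rewrite !inE negb_and !negbK.
move/subset_leq_card; rewrite cardsT card_ord cards2 => /leq_trans; apply.
by case: (i != j).
Qed.

Lemma gen_moves (i : 'I_n) : exists2 s, s \in S & s i != i.
Proof.
apply/exists_inP; apply: contraT => /exists_inPn Sfix_i.
have [j /andP[ji _]] := exists_third_point i i.
have Sfix s : s \in S -> forall z, z \in [set i] -> s z \in [set i].
  by move=> sS z /set1P->; rewrite inE; apply/negbNE/Sfix_i.
by have := gen_stable_set Sfix (tperm i j) (set11 i); rewrite inE tpermL (negbTE ji).
Qed.

Lemma gen_moves_pair (i j : 'I_n) : i != j ->
  exists2 x, x \in S & (x != tperm i j) && ((x i != i) || (x j != j)).
Proof.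
move=> ij; apply/exists_inP; apply: contraT => /exists_inPn Sfix_ij.
have [k /andP[ki kj]] := exists_third_point i j.
have Sfix s : s \in S -> forall z, z \in [set i; j] -> s z \in [set i; j].
  move=> sS z; rewrite !inE; have [->|sij] := eqVneq s (tperm i j).
    by case/orP=> /eqP->; rewrite ?tpermL ?tpermR eqxx ?orbT.
  move: (Sfix_ij s sS); rewrite sij negb_or !negbK => /andP[/eqP si /eqP sj].
  by case/orP=> /eqP->; rewrite ?si ?sj eqxx ?orbT.
have := gen_stable_set Sfix (tperm i k) (setU11 i [set j]).
by rewrite !inE tpermL (negbTE ki) (negbTE kj).
Qed.

End Generation.

Section StabiliserOnS.
Variables (n : nat) (S : {set {perm 'I_n}}).
Hypothesis transpS : forall s, s \in S -> transposition s.
Variable f : {perm {perm 'I_n}}.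
Hypothesis fG : f \in cay_stab S.

Let fS s : s \in S -> f s \in S.
Proof. by rewrite (cay_stab_memS transpS _ fG). Qed.

Let f_neq s t : s != t -> f s != f t.
Proof. by rewrite (inj_eq perm_inj). Qed.

Lemma stab_overlap s t : s \in S -> t \in S -> s != t ->
  overlap (f s) (f t) = overlap s t.
Proof.
move=> sS tS st; apply: negb_inj.
rewrite -!(private_common_nbrE transpS) ?fS ?f_neq //.
exact: private_common_nbr_stab.
Qed.

Lemma stab_overlap_conj s t u : s \in S -> t \in S -> u \in S ->
  s != t -> s != u -> t != u ->
  overlap (f s) (f t) && (f u == f s ^ f t) = overlap s t && (u == s ^ t).
Proof.
move=> sS tS uS st su tu.
by rewrite -!(common_nbr3E transpS) ?fS ?f_neq ?common_nbr3_stab.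
Qed.

Lemma stab_moves_common s t x i p : s \in S -> t \in S -> x \in S -> s != t ->
  s i != i -> t i != i -> f s p != p -> f t p != p -> x i != i -> f x p != p.
Proof.
move=> sS tS xS st si ti sp tp xi.
have [->|xs] := eqVneq x s; first by [].
have [->|xt] := eqVneq x t; first by [].
(* Otherwise f x = f s ^ f t, hence x = s ^ t, which fixes i. *)
apply: contraT; rewrite negbK => xp.
have xsO : overlap (f x) (f s) by rewrite stab_overlap // (overlap_at xi si).
have xtO : overlap (f x) (f t) by rewrite stab_overlap // (overlap_at xi ti).
have fxE := overlap_transp_conj (transpS (fS sS)) (transpS (fS tS))
  (transpS (fS xS)) (f_neq st) sp tp xp xsO xtO.
have := stab_overlap_conj sS tS xS st; rewrite fxE eqxx andbT.
rewrite stab_overlap // (overlap_at si ti) eq_sym xs eq_sym xt.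
move=> /(_ isT isT) /esym/eqP xE.
by move: (transp_conj_fix (transpS sS) (transpS tS) st si ti); rewrite -xE (negbTE xi).
Qed.

End StabiliserOnS.

Section PointMap.
Variables (n : nat) (S : {set {perm 'I_n}}).
Hypothesis transpS : forall s, s \in S -> transposition s.
Hypotheses (genS : <<S>> = [set: {perm 'I_n}]) (n_gt2 : (2 < n)%N).
Variable f : {perm {perm 'I_n}}.
Hypothesis fG : f \in cay_stab S.

(* The point [p] is the image of [i] in the permutation of ['I_n] induced by [f]. *)
Definition point_image i p := forall x, x \in S -> (x i != i) = (f x p != p).

Let fS s : s \in S -> f s \in S.
Proof. by rewrite (cay_stab_memS transpS _ fG). Qed.

Lemma point_image_of_common s t i : s \in S -> t \in S -> s != t ->
  s i != i -> t i != i -> exists p, point_image i p.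
Proof.
move=> sS tS st si ti.
have := overlap_at si ti; rewrite -(stab_overlap transpS fG) //.
case/existsP=> p /andP[sp tp]; exists p => x xS; apply/idP/idP.
  exact: (stab_moves_common transpS fG sS tS xS st si ti sp tp).
have fVG : f^-1 \in cay_stab S by rewrite groupV.
have fst : f s != f t by rewrite (inj_eq perm_inj).
move=> xp; have := stab_moves_common transpS fVG (fS sS) (fS tS) (fS xS) fst.
by rewrite !permK => /(_ p i sp tp si ti xp).
Qed.

Lemma point_image_of_leaf s i : s \in S -> s i != i ->
  (forall x, x \in S -> x i != i -> x = s) -> exists p, point_image i p.
Proof.
(* Track i through the other point j of s, which a second element of S moves. *)
move=> sS si leaf; set j := s i.
have sE : s = tperm i j := transpE (transpS sS) si.
have ij : i != j by rewrite eq_sym.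
have [x xS /andP[xs xij]] := gen_moves_pair genS n_gt2 ij.
rewrite -sE in xs.
have xj : x j != j.
  by case/orP: xij => // xi; move: xs; rewrite (leaf _ xS xi) eqxx.
have sj : s j != j := transp_moves_image (transpS sS) si.
have [q qP] := point_image_of_common (xS : x \in S) sS xs xj sj.
have sq : f s q != q by rewrite -qP.
have sp : f s (f s q) != f s q := transp_moves_image (transpS (fS sS)) sq.
exists (f s q) => y yS; have [->|ys] := eqVneq y s; first by rewrite si sp.
have -> : (y i != i) = false.
  by apply/negbTE; apply: contra ys => yi; rewrite (leaf _ yS yi).
apply/esym; apply: contraNF (ys) => yp.
have := overlap_at yp sp; rewrite (stab_overlap transpS fG) //.
case/existsP=> z /andP[yz]; rewrite {1}sE tperm_movesE // => /orP[]/eqP zE.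
  by move: yz; rewrite zE => /(leaf _ yS)/eqP.
have yq : f y q != q by rewrite -qP // -zE.
have qp : q != f s q by rewrite eq_sym.
have := transp_eq_moved2 (transpS (fS yS)) (transpS (fS sS)) qp yq yp sq sp.
by move/perm_inj/eqP.
Qed.

Lemma point_image_exists i : exists p, point_image i p.
Proof.
have [s sS si] := gen_moves genS n_gt2 i.
have [t /andP[/andP[tS ts] ti]|] :=
  pickP [pred t | (t \in S) && (t != s) && (t i != i)].
  exact: point_image_of_common tS sS ts ti si.
move=> leaf; apply: (point_image_of_leaf sS si) => x xS xi.
by apply/eqP; move: (leaf x); rewrite /= xS xi andbT => /negbFE.
Qed.

Lemma point_image_inj i i' p : point_image i p -> point_image i' p -> i = i'.
Proof.
move=> ip i'p; apply/eqP; apply: contraT => ii'.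
have same x : x \in S -> (x i != i) = (x i' != i') by move=> xS; rewrite ip // i'p.
have iT := tperm_transposition ii'.
have Ti : tperm i i' i != i by rewrite tpermL eq_sym.
have Ti' : tperm i i' i' != i' by rewrite tpermR.
have [x xS /andP[xT xii']] := gen_moves_pair genS n_gt2 ii'.
have xi : x i != i by case/orP: xii' => // xi'; rewrite same.
have xi' : x i' != i' by rewrite -same.
by move: xT; rewrite (transp_eq_moved2 (transpS xS) iT ii' xi xi' Ti Ti') eqxx.
Qed.

Lemma stab_conj_on_S : exists g : {perm 'I_n}, {in S, forall s, f s = s ^ g}.
Proof.
have [pi piP] := fin_all_exists point_image_exists.
have pi_inj : injective pi.
  by move=> i i' eq_pi; apply: point_image_inj (piP i) _; rewrite eq_pi.
exists (perm pi_inj) => s sS; case: (transpS sS) => i [j [ij sE]].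
have si : s i != i by rewrite sE tpermL eq_sym.
have sj : s j != j by rewrite sE tpermR.
have pij : pi i != pi j by rewrite (inj_eq pi_inj).
rewrite {2}sE tpermJ !permE.
apply: (transp_eq_moved2 (transpS (fS sS)) (tperm_transposition pij) pij).
- by rewrite -(piP i).
- by rewrite -(piP j).
- by rewrite tpermL eq_sym.
- by rewrite tpermR.
Qed.

End PointMap.

Lemma Aut_gen_fix_eq1 (gT : finGroupType) (A : {set gT}) (a : {perm gT}) :
  a \in Aut <<A>> -> {in A, a =1 id} -> a = 1.
Proof.
move=> aut aA; apply: (eq_Aut aut (group1 _)) => x; rewrite perm1.
have fixG : group_set [set y in <<A>> | a y == y].
  apply/group_setP; rewrite inE group1 -{1}(autmE aut) morph1 eqxx; split=> // y z.
  rewrite !inE => /andP[yA /eqP ay] /andP[zA /eqP az].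
  by rewrite groupM // -(autmE aut) morphM //= !autmE ay az.
have : A \subset Group fixG.
  by apply/subsetP=> y yA; rewrite inE mem_gen //= aA.
by rewrite -gen_subG => /subsetP sub /sub; rewrite inE => /andP[_ /eqP].
Qed.

Section Decomposition.
Variables (n : nat) (S : {set {perm 'I_n}}).
Hypothesis transpS : forall s, s \in S -> transposition s.
Hypotheses (genS : <<S>> = [set: {perm 'I_n}]) (n_gt2 : (2 < n)%N).

Lemma AutSnS_sub_stab : AutSnS S \subset cay_stab S.
Proof.
apply/subsetP=> a; rewrite inE => /andP[aut /eqP aS].
have aM x y : a (x * y) = a x * a y by rewrite -(autmE aut) morphM ?inE.
have aV x : a x^-1 = (a x)^-1 by rewrite -(autmE aut) morphV ?inE.
have amemS x : (a x \in S) = (x \in S) by rewrite -{1}aS mem_imset //; apply: perm_inj.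
have a1 : a 1 = 1 by rewrite -(autmE aut) morph1.
rewrite cay_stabE a1 eqxx andbT inE.
by apply/forallP=> h; apply/forallP=> k; rewrite /cay_adj -!aV -!aM !amemS.
Qed.

Lemma cay_local_normal : cay_local S <| cay_stab S.
Proof. by rewrite cay_localE (normalGI (cay_stab_norm transpS)) ?astab_normal. Qed.

Lemma cay_local_AutSnS_trivial : cay_local S :&: AutSnS S = 1.
Proof.
apply/setP=> a; rewrite in_setI in_set1 cay_localE; apply/andP/eqP => [[]|->].
  case/setIP=> _ /astabP aS; rewrite inE => /andP[aut _].
  by apply: (Aut_gen_fix_eq1 (A := S)); rewrite ?genS // => s /aS.
rewrite group1 inE group1; split=> //; apply/eqP; rewrite -[RHS]imset_id.
by apply: eq_imset => x; rewrite perm1.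
Qed.

Lemma cay_stab_eq_local_mul_AutSnS : cay_stab S = cay_local S * AutSnS S.
Proof.
have localG : cay_local S \subset cay_stab S by rewrite cay_localE subsetIl.
apply/eqP; rewrite eqEsubset mul_subG ?AutSnS_sub_stab // andbT.
apply/subsetP=> f fG; have [g fE] := stab_conj_on_S transpS genS n_gt2 fG.
set a := conj_aut [set: {perm 'I_n}] g.
have aE x : a x = x ^ g by rewrite conj_autE ?inE.
have aAutS : a \in AutSnS S.
  rewrite inE Aut_aut eqEcard card_imset ?leqnn ?andbT; last exact: perm_inj.
  by apply/subsetP=> _ /imsetP[s sS ->]; rewrite aE -fE // (cay_stab_memS transpS _ fG).
rewrite -(mulgKV a f) mem_mulg // cay_localE inE groupM ?groupV //=;
  last by apply: (subsetP AutSnS_sub_stab).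
by apply/astabP=> s sS; rewrite /= apermE permM fE // -aE permK.
Qed.

End Decomposition.

Theorem proposition7 (n : nat) (S : {set {perm 'I_n}}) :
  (5 <= n)%N ->
  (forall s, s \in S -> is_transposition s) ->
  <<S>> = [set: {perm 'I_n}] ->
  [/\ cay_stab S = cay_local S * AutSnS S,
      cay_local S <| cay_stab S
    & cay_local S :&: AutSnS S = 1].
Proof.
move=> n_ge5 transpS genS; have n_gt2 : (2 < n)%N by apply: leq_trans n_ge5.
split.
- exact: cay_stab_eq_local_mul_AutSnS.
- exact: cay_local_normal.
- exact: cay_local_AutSnS_trivial.
Qed.
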